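(* Let $X$ be an infinite h-homogeneous zero-dimensional compact Hausdorff space, let $\alpha=(A_1,\dots,A_n)$ be an ordered partition of $X$ into nonempty clopen sets, and let $\upsilon\in\Phi(X)$. Then $\upsilon\in\mathfrak U_\alpha$ if and only if the induced order $<_\upsilon$ on $\{A_1,\dots,A_n\}$ satisfies $A_i<_\upsilon A_j\iff i<j$. In particular $\upsilon\in\mathfrak U_{t^*_\upsilon(\alpha)}$.
   Context: h-homogeneous: every nonempty clopen subset of $X$ is homeomorphic to $X$. $\mathrm{Exp}(X)$ is the space of nonempty closed subsets of $X$ with the Vietoris topology; $\Phi(X)\subset\mathrm{Exp}(\mathrm{Exp}(X))$ is the space of maximal chains (maximal families in $\mathrm{Exp}(X)$ totally ordered by inclusion). For open sets $U_1,\dots,U_k$ of a space $Y$, $\langle U_1,\dots,U_k\rangle=\{F\in\mathrm{Exp}(Y): F\cap U_i\ne\emptyset\ \forall i,\ F\subset\bigcup_i U_i\}$. For $\alpha=(A_1,\dots,A_n)$ set $\mathcal U_j=\langle A_1,\dots,A_j\rangle\subset \mathrm{Exp}(X)$ and $\mathfrak U_\alpha=\langle\mathcal U_1,\dots,\mathcal U_n\rangle\subset\mathrm{Exp}(\mathrm{Exp}(X))$. For $\upsilon\in\Phi(X)$ and nonempty closed $D$, $D_\upsilon=\bigcap\{A\in\upsilon:A\cap D\ne\emptyset\}$; the induced order is $A_i<_\upsilon A_j$ iff $(A_i)_\upsilon\subseteq(A_j)_\upsilon$, and $t^*_\upsilon(\alpha)$ is the ordered partition listing $A_1,\dots,A_n$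 in increasing $<_\upsilon$-order. *)

From mathcomp Require Import all_boot all_order.
From mathcomp Require Import all_classical all_reals all_analysis.
Set Implicit Arguments. Unset Strict Implicit. Unset Printing Implicit Defensive.
Local Open Scope classical_set_scope.

Definition zero_dim_base (X : topologicalType) : Prop :=
  forall (U : set X) (x : X), open U -> U x ->
    exists V : set X, [/\ clopen V, V x & V `<=` U].

(* the subspace A (with the topology induced from X) is homeomorphic to X:
   f : A -> X continuous (for the subspace topology), g : X -> A continuous,
   mutually inverse *)
Definition homeomorphic_to_whole (X : topologicalType) (A : set X) : Prop :=
  exists f g : X -> X,
    [/\ {within A, continuous f}, continuous g, (forall y, A (g y)),
        (forall x, A x -> g (f x) = x) & (forall y, f (g y) = y)].

Definition h_homogeneous (X : topologicalType) : Prop :=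
  forall A : set X, clopen A -> A !=set0 -> homeomorphic_to_whole A.

Definition Exp (X : topologicalType) : set (set X) :=
  [set F | closed F /\ F !=set0].

Definition is_chain (X : topologicalType) (c : set (set X)) : Prop :=
  c `<=` @Exp X /\ (forall F G, c F -> c G -> F `<=` G \/ G `<=` F).

Definition Phi (X : topologicalType) : set (set (set X)) :=
  [set u | is_chain u /\ (forall c, is_chain c -> u `<=` c -> c = u)].

(* ordered partition (A_1,...,A_n) of X into nonempty clopen sets,
   indexed by 'I_n (A_{k+1} is A k) *)
Definition ordered_clopen_partition (X : topologicalType) (n : nat)
  (A : 'I_n -> set X) : Prop :=
  [/\ (forall i, clopen (A i) /\ A i !=set0),
      (forall i j, i != j -> A i `&` A j = set0) &
      (forall x, exists i, A i x)].

(* U_j = < A_1, ..., A_j > in Exp(X)  (j : 'I_n is the (j+1)-th index) *)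
Definition Ucal (X : topologicalType) (n : nat) (A : 'I_n -> set X) (j : 'I_n)
  : set (set X) :=
  [set F | @Exp X F /\
     (forall i : 'I_n, (i <= j)%N -> F `&` A i !=set0) /\
     (forall x, F x -> exists i : 'I_n, (i <= j)%N /\ A i x)].

(* membership of a family u (already an element of Exp(@Exp X)) in
   Ufrak_alpha = < U_1, ..., U_n > *)
Definition in_Ufrak (X : topologicalType) (n : nat) (A : 'I_n -> set X)
  (u : set (set X)) : Prop :=
  (forall j : 'I_n, u `&` Ucal A j !=set0) /\
  (forall F, u F -> exists j : 'I_n, Ucal A j F).

Definition Dsub (X : topologicalType) (u : set (set X)) (D : set X) : set X :=
  [set x | forall B, u B -> B `&` D !=set0 -> B x].

Definition induced_le (X : topologicalType) (u : set (set X)) (D E : set X)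
  : Prop := Dsub u D `<=` Dsub u E.

From mathcomp Require Import all_boot all_order.
From mathcomp Require Import all_classical all_reals all_analysis.
Set Implicit Arguments. Unset Strict Implicit. Unset Printing Implicit Defensive.
Local Open Scope classical_set_scope.

(* In a maximal
   chain u, D_u is the least member of u meeting D: compactness shows that it
   meets D, maximality that it belongs to u.  Disjoint clopen D and E cannot
   have D_u = E_u: the closed set G = (D_u minus D and E) plus a point of D_u
   in D is comparable with every member of u, hence lies in u; as G meets D it
   contains D_u = E_u, which meets E, whereas G does not.  So u strictly orders
   the blocks of a partition, and u lies in U_alpha exactly when this order is
   the index order: U_j is witnessed by (A_j)_u, and a member F of u lies in
   U_j for the largest j with F meeting A_j. *)

Section Dsub_chain.
Variable X : topologicalType.
Implicit Types (u : set (set X)) (B D E F : set X).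

Lemma Dsub_closed u D : is_chain u -> closed (Dsub u D).
Proof.
move=> [uExp _].
have -> : Dsub u D = \bigcap_(B in [set B | u B /\ B `&` D !=set0]) B.
  by apply/seteqP; split=> x Dx B; [case; exact: Dx | move=> ? ?; exact: Dx].
by apply: closed_bigI => B [/uExp []].
Qed.

Lemma Dsub_above u D F : u F -> F `&` D !=set0 -> Dsub u D `<=` F.
Proof. by move=> uF FD x; apply. Qed.

Lemma Dsub_below u D F : is_chain u -> u F -> ~ (F `&` D !=set0) ->
  F `<=` Dsub u D.
Proof.
move=> [_ cmp] uF FD x Fx B uB [y [By Dy]].
case: (cmp _ _ uF uB) => [FB|BF]; first exact: FB.
by exfalso; apply: FD; exists y; split=> //; apply: BF.
Qed.

Lemma Dsub_meet u D : is_chain u -> compact [set: X] -> closed D ->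
  D !=set0 -> Dsub u D `&` D !=set0.
Proof.
move=> [uExp cmp] cptX cD [x0 Dx0].
have [[B0 [uB0 B0D]]|noB] :=
  pselect (exists B, u B /\ B `&` D !=set0); last first.
  by exists x0; split=> // B uB BD; exfalso; apply: noB; exists B.
pose S := [set B | u B /\ B `&` D !=set0].
have FS : ProperFilter (filter_from S (fun B => B `&` D)).
  apply: filter_from_proper; last by move=> B [].
  apply: filter_from_filter; first by exists B0.
  move=> B1 B2 SB1 SB2; case: (cmp _ _ SB1.1 SB2.1) => sB;
    [exists B1 | exists B2] => // x [Bx Dx]; do !split=> //; exact: sB.
have [|p [_ clp]] := cptX _ FS; first by exists B0.
rewrite clusterE in clp.
have inBD B : S B -> (B `&` D) p.
  move=> SB; have [cB _] := uExp _ SB.1.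
  have /closure_id -> : closed (B `&` D) by exact: closedI.
  by apply: clp; exists B.
exists p; split; last exact: (inBD _ (conj uB0 B0D)).2.
by move=> B uB BD; exact: (inBD _ (conj uB BD)).1.
Qed.

Lemma Phi_add u G : Phi u -> closed G -> G !=set0 ->
  (forall B, u B -> B `<=` G \/ G `<=` B) -> u G.
Proof.
move=> [[uExp cmp] umax] cG G0 cmpG.
have chG : is_chain (u `|` [set G]).
  split=> [B [/uExp // | ->] // | B1 B2 [uB1|->] [uB2|->]]; last by left.
  - exact: cmp.
  - exact: cmpG.
  - by case: (cmpG _ uB2); [right | left].
by rewrite -(umax _ chG (@subsetUl _ u [set G])); right.
Qed.

Lemma Dsub_in u D : Phi u -> compact [set: X] -> closed D -> D !=set0 ->
  u (Dsub u D).
Proof.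
move=> Pu cptX cD D0; apply: Phi_add => //.
- exact: Dsub_closed Pu.1.
- by have [x [Dux _]] := Dsub_meet Pu.1 cptX cD D0; exists x.
move=> B uB; have [BD|BD] := pselect (B `&` D !=set0).
  by right; apply: Dsub_above.
by left; apply: Dsub_below Pu.1 uB BD.
Qed.

Lemma induced_le_total u D E : Phi u -> compact [set: X] ->
  closed D -> D !=set0 -> closed E -> E !=set0 ->
  induced_le u D E \/ induced_le u E D.
Proof.
move=> Pu cptX cD D0 cE E0.
exact: Pu.1.2 _ _ (Dsub_in Pu cptX cD D0) (Dsub_in Pu cptX cE E0).
Qed.

Lemma induced_le_of_meet u D E : Phi u -> compact [set: X] ->
  closed E -> E !=set0 -> Dsub u E `&` D !=set0 -> induced_le u D E.
Proof. by move=> Pu cptX cE E0; apply: Dsub_above (Dsub_in Pu cptX cE E0). Qed.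

Lemma Dsub_disjoint_neq u D E : Phi u -> hausdorff_space X ->
  compact [set: X] -> clopen D -> D !=set0 -> clopen E -> E !=set0 ->
  D `&` E = set0 -> Dsub u D <> Dsub u E.
Proof.
move=> Pu hX cptX [oD cD] D0 [oE cE] E0 DE0 DuE.
have [p [Dup Dp]] := Dsub_meet Pu.1 cptX cD D0.
have [q [Euq Eq]] := Dsub_meet Pu.1 cptX cE E0.
rewrite -DuE in Euq.
pose G := (Dsub u D `&` ~` D `&` ~` E) `|` [set p].
have cG : closed G.
  apply: closedU.
    by apply: closedI; [apply: closedI|]; rewrite ?closedC //;
      exact: Dsub_closed Pu.1.
  exact: accessible_closed_set1 (hausdorff_accessible hX) p.
have uG : u G.
  apply: Phi_add => //; first by exists p; right.
  move=> B uB; have [BD|BD] := pselect (B `&` D !=set0).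
    right=> x [[[Dux _] _]|->]; first exact: Dsub_above Dux.
    exact: Dsub_above Dup.
  have [BE|BE] := pselect (B `&` E !=set0).
    by right=> x [[[Dux _] _]|->]; apply: (Dsub_above uB BE); rewrite -DuE.
  left=> x Bx; left; split; [split|].
  - exact: Dsub_below Pu.1 uB BD x Bx.
  - by move=> Dx; apply: BD; exists x.
  - by move=> Ex; apply: BE; exists x.
have GD : G `&` D !=set0 by exists p; split=> //; right.
have [[[_ _] /(_ Eq) //]|qp] := Dsub_above uG GD Euq.
have : (D `&` E) p by split=> //; rewrite -qp.
by rewrite DE0.
Qed.

End Dsub_chain.

Section ordered_partition.
Variables (X : topologicalType) (n : nat) (A : 'I_n -> set X).
Variable u : set (set X).
Hypotheses (hX : hausdorff_space X) (cptX : compact [set: X]).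
Hypothesis Pu : Phi u.
Hypothesis clopenA : forall i, clopen (A i).
Hypothesis A0 : forall i, A i !=set0.
Hypothesis disjA : forall i j, i != j -> A i `&` A j = set0.
Hypothesis coverA : forall x, exists i, A i x.

Let closedA i : closed (A i). Proof. by case: (clopenA i). Qed.
Arguments closedA : clear implicits.

Let le i j := induced_le u (A i) (A j).

Lemma induced_le_antisym i j : i != j -> le i j -> le j i -> False.
Proof.
move=> ij leij leji.
apply: (Dsub_disjoint_neq Pu hX cptX (clopenA i) (A0 i) (clopenA j) (A0 j)).
  exact: disjA.
by apply/seteqP; split.
Qed.

Lemma induced_le_total_index i j : le i j \/ le j i.
Proof.
exact: induced_le_total Pu cptX (closedA i) (A0 i) (closedA j) (A0 j).
Qed.

Lemma induced_le_of_Dsub_meet i j : Dsub u (A j) `&` A i !=set0 -> le i j.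
Proof. exact: induced_le_of_meet Pu cptX (closedA j) (A0 j). Qed.

Lemma Dsub_meet_index i : Dsub u (A i) `&` A i !=set0.
Proof. exact: Dsub_meet Pu.1 cptX (closedA i) (A0 i). Qed.

Lemma partition_index_unique i j x : A i x -> A j x -> i = j.
Proof.
move=> Aix Ajx; apply/eqP; apply: contraT => /disjA ij0.
by have : (A i `&` A j) x by []; rewrite ij0.
Qed.

Lemma in_Ufrak_sorted : in_Ufrak A u -> forall i j : 'I_n, (i < j)%N -> le i j.
Proof.
move=> [_ inU] i j ij.
have [k [_ [meetF inF]]] := inU _ (Dsub_in Pu cptX (closedA j) (A0 j)).
have [x [Dux Ajx]] := Dsub_meet_index j.
have [l [lk Alx]] := inF x Dux.
rewrite (partition_index_unique Alx Ajx) in lk.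
by apply: induced_le_of_Dsub_meet; apply: meetF; exact: leq_trans (ltnW ij) lk.
Qed.

Definition lower_blocks i : {set 'I_n} := [set k | (k != i) && `[< le k i >]].

Lemma card_lower_blocks_lt i : (#|lower_blocks i| < n)%N.
Proof.
rewrite -[n in (_ < n)%N]card_ord; apply: proper_card; apply/fintype.properP.
by split; [exact: subset_predT | exists i; rewrite // finset.inE eqxx].
Qed.

Lemma card_lower_blocks_mono i j : i != j -> le i j ->
  (#|lower_blocks i| < #|lower_blocks j|)%N.
Proof.
move=> ij leij; apply: proper_card; apply/fintype.properP; split.
  apply/fintype.subsetP => k; rewrite !finset.inE => /andP[ki /asboolP leki].
  apply/andP; split; last by apply/asboolP => x /leki /leij.
  apply: contraNneq ki => kj; move: leki.
  by rewrite kj => /(induced_le_antisym ij leij).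
exists i; first by rewrite finset.inE ij; exact/asboolP.
by rewrite finset.inE eqxx.
Qed.

Definition block_rank i : 'I_n := Ordinal (card_lower_blocks_lt i).

Lemma block_rank_inj : injective block_rank.
Proof.
move=> i j /(congr1 val) /= rij; apply/eqP; apply: contraT => ij.
have [leij|leji] := induced_le_total_index i j.
  by move: (card_lower_blocks_mono ij leij); rewrite rij ltnn.
have ji : j != i by rewrite eq_sym.
by move: (card_lower_blocks_mono ji leji); rewrite rij ltnn.
Qed.

Lemma exists_sorting_perm : exists s : 'I_n -> 'I_n, bijective s /\
  (forall i j : 'I_n, (i < j)%N -> le (s i) (s j)).
Proof.
exists (invF block_rank_inj); split.
  by exists block_rank; [exact: f_invF | exact: invF_f].
set s := invF block_rank_inj.
have rank_s k : #|lower_blocks (s k)| = k.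
  by have := congr1 val (f_invF block_rank_inj k).
move=> i j ij; have [//|lesji] := induced_le_total_index (s i) (s j).
have sji : s j != s i.
  by apply: contraTneq ij => sij; rewrite -(rank_s i) -sij rank_s ltnn.
by move: (card_lower_blocks_mono sji lesji); rewrite !rank_s ltnNge (ltnW ij).
Qed.

Section sorted.
Hypothesis sortedA : forall i j : 'I_n, (i < j)%N -> le i j.

Lemma sorted_induced_le_iff i j : i != j -> (le i j <-> (i < j)%N).
Proof.
move=> ij; split=> [leij|]; last exact: sortedA.
rewrite ltn_neqAle; apply/andP; split => //; rewrite leqNgt; apply/negP => ji.
exact: induced_le_antisym ij leij (sortedA ji).
Qed.

Lemma sorted_le_leq i j : le i j -> (i <= j)%N.
Proof.
have [-> //|ij leij] := eqVneq i j.
by apply: ltnW; apply/(sorted_induced_le_iff ij).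
Qed.

Lemma sorted_le_of_leq (i j : 'I_n) : (i <= j)%N -> le i j.
Proof.
rewrite leq_eqVlt => /orP[/eqP/val_inj -> | /sortedA //].
exact: subset_refl.
Qed.

Lemma Dsub_in_Ucal j : Ucal A j (Dsub u (A j)).
Proof.
have [y [Duy Ajy]] := Dsub_meet_index j.
split; first by split; [exact: Dsub_closed Pu.1 | exists y].
split=> [i ij | x Dux].
  have [z [Duz Aiz]] := Dsub_meet_index i.
  by exists z; split=> //; apply: sorted_le_of_leq ij z Duz.
have [k Akx] := coverA x; exists k; split=> //.
by apply: sorted_le_leq; apply: induced_le_of_Dsub_meet; exists x.
Qed.

Lemma chain_member_in_Ucal F : u F -> exists j, Ucal A j F.
Proof.
move=> uF; have [cF [x0 Fx0]] := Pu.1.1 _ uF.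
have [k0 Ak0x0] := coverA x0.
have FAk0 : `[< F `&` A k0 !=set0 >] by apply/asboolP; exists x0.
have [j /asboolP FAj jmax] :=
  @arg_maxnP _ k0 (fun i => `[< F `&` A i !=set0 >]) val FAk0.
exists j; split; first by split=> //; exists x0.
split=> [i ij | x Fx].
  have [-> //| neq_ij] := eqVneq i j; apply: contrapT => FAi.
  have leji : le j i.
    by move=> x /(Dsub_above uF FAj) /(Dsub_below Pu.1 uF FAi).
  by move: (sorted_le_leq leji); rewrite leqNgt ltn_neqAle neq_ij ij.
have [k Akx] := coverA x; exists k; split=> //.
by apply: jmax; apply/asboolP; exists x.
Qed.

Lemma sorted_in_Ufrak : in_Ufrak A u.
Proof.
split=> [j | F uF]; last exact: chain_member_in_Ucal.
exists (Dsub u (A j)); split; last exact: Dsub_in_Ucal.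
exact: Dsub_in Pu cptX (closedA j) (A0 j).
Qed.

End sorted.
End ordered_partition.

Theorem lemma3p4 (X : topologicalType) (n : nat) (A : 'I_n -> set X)
  (u : set (set X)) :
  hausdorff_space X -> compact [set: X] -> @zero_dim_base X ->
  infinite_set [set: X] -> @h_homogeneous X ->
  ordered_clopen_partition A -> @Phi X u ->
  (in_Ufrak A u <->
     (forall i j : 'I_n, i != j -> (induced_le u (A i) (A j) <-> (i < j)%N)))
  /\
  ((exists s : 'I_n -> 'I_n, bijective s /\
      (forall i j : 'I_n, (i < j)%N -> induced_le u (A (s i)) (A (s j)))) /\
   (forall s : 'I_n -> 'I_n, bijective s ->
      (forall i j : 'I_n, (i < j)%N -> induced_le u (A (s i)) (A (s j))) ->
      in_Ufrak (fun k => A (s k)) u)).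
Proof.
move=> hX cptX _ _ _ [/all_and2[clopenA A0] disjA coverA] Pu.
split; [split=> [inU | le_iff] | split].
- by apply: sorted_induced_le_iff => //; exact: in_Ufrak_sorted.
- apply: sorted_in_Ufrak => // i j ij.
  by apply/le_iff => //; rewrite neq_ltn ij.
- exact: exists_sorting_perm.
move=> s [t st ts] sorted; have sinj := can_inj st.
apply: sorted_in_Ufrak sorted => // [i j ij | x].
- by apply: disjA; rewrite (inj_eq sinj).
- by have [k Akx] := coverA x; exists (t k); rewrite ts.
Qed.
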